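(* In any PIR scheme (for any fixed desired index) on the multigraph-based PIR system, let $S_i$ and $S_j$ be two distinct servers that share the set of $r$ files $\mathcal{W}_{i,j}$. Then, with $\mathcal{Q}=\{Q_1,\dots,Q_N\}$, $$H(A_i)+H(A_j)\ \ge\ H(A_i\mid \mathcal{W}\setminus\mathcal{W}_{i,j},\mathcal{Q})+H(A_j\mid \mathcal{W}\setminus\mathcal{W}_{i,j},\mathcal{Q})\ \ge\ \left(1+\frac12+\cdots+\frac1{2^{r-1}}\right)L.$$
   Context: Multigraph-based PIR model. There are $N$ non-colluding servers $S_1,\dots,S_N$. Let $G$ be a simple graph on vertex set $\{S_1,\dots,S_N\}$ with $K'$ edges, and $G^{(r)}$ the $r$-multigraph obtained by replacing each edge by $r$ parallel edges. There are $K=rK'$ files, each independent and uniform on $\mathbb{F}_2^{L}$ (so $H(W)=L$ for each file $W$); for each edge of $G$, a distinct set of $r$ files is stored exactly on its two endpoints. $\mathcal{W}$ is the set of all files, $\mathcal{W}_{S_i}$ the set of files on $S_i$, and $\mathcal{W}_{i,j}$ the set of $r$ files stored on both $S_i$ and $S_j$. In a PIR scheme, a user privately chooses a desired file index $\theta$ and generates queries $Q_1,\dots,Q_N$ independent of all files; answer $A_i$ is a deterministic function of $Q_i$ and $\mathcal{W}_{S_i}$. Reliability: $H(W_\theta\mid A_1,\dots,A_N,Q_1,\dots,Q_N)=0$. Privacy: for every server $i$ and every $\theta$, the distribution of $(Q_i^{(\theta)},A_i^{(\theta)},\mathcal{W}_{S_i})$ does not depend on $\theta$. *)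

From HB Require Import structures.
From Stdlib Require Import Reals.
From mathcomp Require Import all_boot all_order all_algebra.
From mathcomp Require Import Rstruct.

Set Implicit Arguments.
Unset Strict Implicit.
Unset Printing Implicit Defensive.
Import Order.TTheory GRing.Theory Num.Theory.

Local Open Scope ring_scope.

(** Logarithm in base 2 (entropies are measured in bits, so H(W) = L). *)
Definition log2 (x : R) : R := (ln x / ln 2)%R.

Section Entropy.
Variables (Omega : finType) (P : Omega -> R).

Definition prob_eq (T : finType) (X : Omega -> T) (x : T) : R :=
  \sum_(w : Omega | X w == x) P w.

(** Shannon entropy (bits), with the convention 0 log 0 = 0. *)
Definition entropy (T : finType) (X : Omega -> T) : R :=
  - \sum_(x : T | 0 < prob_eq X x) prob_eq X x * log2 (prob_eq X x).

Definition cond_entropy (T1 T2 : finType) (X : Omega -> T1) (Y : Omega -> T2) : R :=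
  \sum_(xy : T1 * T2 | 0 < prob_eq (fun w => (X w, Y w)) xy)
     prob_eq (fun w => (X w, Y w)) xy *
     log2 (prob_eq Y xy.2 / prob_eq (fun w => (X w, Y w)) xy).
End Entropy.

(** Files are indexed by 'I_K' * 'I_r: file (e,k) is the k-th of the
    r files attached to edge e (so K = r K').  A file is an element of F_2^L,
    represented as {ffun 'I_L -> bool}. *)

Definition simple_graph (N K' : nat) (ends : 'I_K' -> 'I_N * 'I_N) : Prop :=
  (forall e, (ends e).1 != (ends e).2) /\
  (forall e e', ((ends e == ends e') ||
                 (ends e == ((ends e').2, (ends e').1))) -> e = e').

Definition fileT (L : nat) := {ffun 'I_L -> bool}.
Definition filesT (K' r L : nat) := {ffun 'I_K' * 'I_r -> fileT L}.

Definition stored (N K' r : nat) (ends : 'I_K' -> 'I_N * 'I_N)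
    (f : 'I_K' * 'I_r) (s : 'I_N) : bool :=
  (s == (ends f.1).1) || (s == (ends f.1).2).

Definition restrict (K' r L : nat) (S : pred ('I_K' * 'I_r)) (w : filesT K' r L)
  : {ffun 'I_K' * 'I_r -> option (fileT L)} :=
  [ffun f => if S f then Some (w f) else None].

(** The probability space: user randomness u : U (distribution pU), independent
    of the files, which are i.i.d. uniform on F_2^L. *)
Definition jointP (U : finType) (pU : U -> R) (K' r L : nat)
    (om : U * filesT K' r L) : R :=
  pU om.1 / #|{: filesT K' r L}|%:R.

Definition answer_local (N K' r L : nat) (ends : 'I_K' -> 'I_N * 'I_N)
    (QT AT : finType) (A : 'I_N -> QT -> filesT K' r L -> AT) : Prop :=
  forall (n : 'I_N) (q : QT) (w w' : filesT K' r L),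
    (forall f, stored ends f n -> w f = w' f) -> A n q w = A n q w'.

From HB Require Import structures.
From Stdlib Require Import Reals.
From mathcomp Require Import all_boot all_order all_algebra.
From mathcomp Require Import Rstruct.
From mathcomp Require Import ring lra.
Import Order.TTheory GRing.Theory Num.Theory.

(* Write T_k for H(A_i | C_k, Q) + H(A_j | C_k, Q), where C_k consists of the files outside
   W_{i,j} together with the first k files of W_{i,j}; T_0 is the middle term of the statement
   and T_r >= 0.  Given C_k and the queries, the answer of S_n depends only on the query and the
   files that S_n itself sees, so T_k is a functional of the joint law of (Q_n, A_n, W_{S_n}) and,
   by privacy, does not depend on the desired index.  Take the desired file to be the (k+1)-st
   file W of W_{i,j}: all answers other than A_i and A_j are functions of (C_k, Q), so reliability
   gives H(W | A_i, A_j, C_k, Q) = 0.  Together with submodularity of entropy and the independence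
   of W from C_k this yields T_k >= L + T_{k+1} / 2, and unrolling the recursion gives the bound.
   The first inequality holds because conditioning reduces entropy. *)

Set Implicit Arguments.
Unset Strict Implicit.
Unset Printing Implicit Defensive.

Local Open Scope ring_scope.

Definition inv_ln2 : R := (ln 2)^-1.

Lemma log2E x : log2 x = ln x * inv_ln2.
Proof. by []. Qed.

Lemma ln2_gt0 : 0 < ln 2.
Proof.
by apply/RltP; apply: Rlt_trans ln_lt_2; exact: Rinv_0_lt_compat Rlt_0_2.
Qed.

Lemma inv_ln2_gt0 : 0 < inv_ln2.
Proof. by rewrite invr_gt0 ln2_gt0. Qed.

Lemma log2M a b : 0 < a -> 0 < b -> log2 (a * b) = log2 a + log2 b.
Proof. by move=> /RltP a_gt0 /RltP b_gt0; rewrite !log2E ln_mult // mulrDl. Qed.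

Lemma log2V a : 0 < a -> log2 a^-1 = - log2 a.
Proof. by move=> /RltP a_gt0; rewrite !log2E -RinvE ln_Rinv // mulNr. Qed.

Lemma log2_le a b : 0 < a -> a <= b -> log2 a <= log2 b.
Proof.
move=> a_gt0; rewrite le_eqVlt => /orP[/eqP -> //|ab].
rewrite !log2E ler_wpM2r ?(ltW inv_ln2_gt0) //.
by apply/RleP/Rlt_le/ln_increasing; apply/RltP.
Qed.

Lemma log2_le_sub1 a : 0 < a -> log2 a <= (a - 1) * inv_ln2.
Proof.
move=> /RltP a_gt0; rewrite log2E ler_wpM2r ?(ltW inv_ln2_gt0) // lerBrDl.
by have /RleP := exp_ineq1_le (ln a); rewrite exp_ln.
Qed.

Lemma log2_exp2 (n : nat) : log2 (2 ^+ n) = n%:R.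
Proof.
rewrite log2E -RpowE ln_pow ?INRE; last exact: Rlt_0_2.
by rewrite -mulrA mulfV ?mulr1 // gt_eqF // ln2_gt0.
Qed.

(** * Entropy on a finite probability space *)

Lemma gibbs (I : finType) (p q : I -> R) :
  (forall t, 0 <= p t) -> (forall t, 0 <= q t) -> \sum_t q t <= \sum_t p t ->
  (forall t, 0 < p t -> 0 < q t) ->
  \sum_t p t * log2 (q t) <= \sum_t p t * log2 (p t).
Proof.
move=> p_ge0 q_ge0 sum_qp q_gt0.
have term t : p t * log2 (q t) - p t * log2 (p t) <= (q t - p t) * inv_ln2.
  have := p_ge0 t; rewrite le_eqVlt => /orP[/eqP <-|pt_gt0].
    by rewrite !mul0r subrr subr0 mulr_ge0 // ltW // inv_ln2_gt0.
  have qt_gt0 := q_gt0 t pt_gt0.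
  have -> : p t * log2 (q t) - p t * log2 (p t) = p t * log2 (q t / p t).
    by rewrite log2M ?invr_gt0 // log2V //; ring.
  have -> : (q t - p t) * inv_ln2 = p t * ((q t / p t - 1) * inv_ln2).
    by field; rewrite gt_eqF.
  by rewrite ler_wpM2l ?(ltW pt_gt0) // log2_le_sub1 // divr_gt0.
have : \sum_t (p t * log2 (q t) - p t * log2 (p t)) <= \sum_t (q t - p t) * inv_ln2.
  by apply: ler_sum => t _; apply: term.
rewrite sumrB -mulr_suml sumrB => h.
have : (\sum_t q t - \sum_t p t) * inv_ln2 <= 0.
  by rewrite mulr_le0_ge0 ?subr_le0 // ltW // inv_ln2_gt0.
lra.
Qed.

Lemma sum_pair (T1 T2 : finType) (F : T1 * T2 -> R) :
  \sum_t F t = \sum_x \sum_y F (x, y).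
Proof. by rewrite pair_big; apply: eq_bigr => -[]. Qed.

Section Entropy.
Variables (Omega : finType) (P : Omega -> R).
Hypothesis P_ge0 : forall w, 0 <= P w.
Hypothesis sum_P : \sum_w P w = 1.

Local Notation pr := (prob_eq P).
Local Notation H := (entropy P).

Lemma pr_ge0 (T : finType) (X : Omega -> T) x : 0 <= pr X x.
Proof. exact: sumr_ge0. Qed.

Lemma pr_eq0 (T : finType) (X : Omega -> T) x : ~~ (0 < pr X x) -> pr X x = 0.
Proof. by rewrite lt_def pr_ge0 andbT negbK => /eqP. Qed.

Lemma sum_pr (T : finType) (X : Omega -> T) : \sum_x pr X x = 1.
Proof. by rewrite -sum_P (partition_big X xpredT). Qed.

Lemma sum_pr_fst (T1 T2 : finType) (X : Omega -> T1) (Z : Omega -> T2) z :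
  \sum_x pr (fun w => (X w, Z w)) (x, z) = pr Z z.
Proof.
rewrite /prob_eq [RHS](partition_big X xpredT) //=; apply: eq_bigr => x _.
by apply: eq_bigl => w; rewrite xpair_eqE andbC.
Qed.

Lemma sum_pr_snd (T1 T2 : finType) (X : Omega -> T1) (Z : Omega -> T2) x :
  \sum_z pr (fun w => (X w, Z w)) (x, z) = pr X x.
Proof. by rewrite /prob_eq [RHS](partition_big Z xpredT). Qed.

Lemma sum_pr_fst3 (T1 T2 T3 : finType)
    (X : Omega -> T1) (Y : Omega -> T2) (Z : Omega -> T3) y z :
  \sum_x pr (fun w => (X w, Y w, Z w)) (x, y, z) = pr (fun w => (Y w, Z w)) (y, z).
Proof.
rewrite /prob_eq [RHS](partition_big X xpredT) //=; apply: eq_bigr => x _.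
apply: eq_bigl => w; rewrite !xpair_eqE.
by case: (X w == x); case: (Y w == y); case: (Z w == z).
Qed.

Lemma entropyE (T : finType) (X : Omega -> T) :
  H X = - \sum_x pr X x * log2 (pr X x).
Proof.
rewrite /entropy [in RHS](bigID (fun x => 0 < pr X x)) /=.
by rewrite [X in _ + X]big1 ?addr0 // => x /pr_eq0 ->; rewrite mul0r.
Qed.

Section FunctionOf.
Variables (T1 T2 : finType) (X : Omega -> T1) (Y : Omega -> T2) (g : T1 -> T2).
Hypothesis YE : forall w, Y w = g (X w).

Lemma pr_map y : pr Y y = \sum_(x | g x == y) pr X x.
Proof.
rewrite /prob_eq (partition_big X (fun x => g x == y)) /=; last by move=> w; rewrite YE.
apply: eq_bigr => x /eqP gx; apply: eq_bigl => w.
by rewrite YE; case: (X w =P x) => [->|]; [rewrite gx !eqxx|rewrite andbF].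
Qed.

Lemma pr_le_map x : pr X x <= pr Y (g x).
Proof. by rewrite pr_map (bigD1 x) //= lerDl sumr_ge0 // => x' _; apply: pr_ge0. Qed.

Lemma pr_gt0_map x : 0 < pr X x -> 0 < pr Y (g x).
Proof. by move=> /lt_le_trans; apply; apply: pr_le_map. Qed.

Lemma sum_pr_map (F : T2 -> R) : \sum_y pr Y y * F y = \sum_x pr X x * F (g x).
Proof.
rewrite [RHS](partition_big g xpredT) //=; apply: eq_bigr => y _.
by rewrite pr_map mulr_suml; apply: eq_bigr => x /eqP <-.
Qed.

Lemma entropy_mapE : H Y = - \sum_x pr X x * log2 (pr Y (g x)).
Proof. by rewrite entropyE (sum_pr_map (fun y => log2 (pr Y y))). Qed.

Lemma entropy_map_le : H Y <= H X.
Proof.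
rewrite entropy_mapE entropyE lerN2; apply: ler_sum => x _.
have := pr_ge0 X x; rewrite le_eqVlt => /orP[/eqP <-|px]; first by rewrite !mul0r.
by rewrite ler_wpM2l ?(ltW px) // log2_le // pr_le_map.
Qed.

End FunctionOf.

Lemma entropy_recode (T1 T2 : finType) (X : Omega -> T1) (Y : Omega -> T2) g h :
  (forall w, X w = g (Y w)) -> (forall w, Y w = h (X w)) -> H X = H Y.
Proof.
by move=> XE YE; apply/le_anti; rewrite (entropy_map_le XE) (entropy_map_le YE).
Qed.

Lemma cond_entropyE (T1 T2 : finType) (X : Omega -> T1) (Y : Omega -> T2) :
  cond_entropy P X Y = H (fun w => (X w, Y w)) - H Y.
Proof.
set XY := fun w => (X w, Y w).
have YE w : Y w = (XY w).2 by [].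
rewrite (entropy_mapE YE) (entropyE XY) opprK [RHS]addrC -sumrB /cond_entropy.
rewrite [RHS](bigID (fun xy => 0 < pr XY xy)) /= [X in _ = _ + X]big1 ?addr0; last first.
  by move=> xy /pr_eq0 ->; rewrite !mul0r subrr.
apply: eq_bigr => xy pxy; have py := pr_gt0_map YE pxy.
by rewrite log2M ?invr_gt0 // log2V //; ring.
Qed.

Lemma eq_cond_entropy (T1 T2 : finType) (X : Omega -> T1) (Y Y' : Omega -> T2) :
  Y =1 Y' -> cond_entropy P X Y = cond_entropy P X Y'.
Proof.
move=> YE; rewrite !cond_entropyE.
by congr (_ - _); apply: (entropy_recode (g := id) (h := id)) => w; rewrite /= YE.
Qed.

Lemma cond_entropy_ge0 (T1 T2 : finType) (X : Omega -> T1) (Y : Omega -> T2) :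
  0 <= cond_entropy P X Y.
Proof. by rewrite cond_entropyE subr_ge0 (entropy_map_le (g := snd)). Qed.

Lemma cond_entropy_pair_map (T1 T2 T3 : finType)
    (X : Omega -> T1) (V : Omega -> T2) (Y : Omega -> T3) g :
  (forall w, Y w = g (V w)) ->
  cond_entropy P X (fun w => (Y w, V w)) = cond_entropy P X V.
Proof.
move=> YE; rewrite !cond_entropyE; congr (_ - _).
  apply: (entropy_recode (g := fun t => (t.1, (g t.2, t.2))) (h := fun t => (t.1, t.2.2))).
    by move=> w; rewrite /= YE.
  by [].
by apply: (entropy_recode (g := fun t => (g t, t)) (h := snd)) => w; rewrite //= YE.
Qed.

Lemma sum_pr_cond_product (T1 T2 T3 : finType)
    (X : Omega -> T1) (Y : Omega -> T2) (Z : Omega -> T3) :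
  \sum_(t : T1 * T2 * T3) pr (fun w => (X w, Z w)) (t.1.1, t.2) *
     pr (fun w => (Y w, Z w)) (t.1.2, t.2) / pr Z t.2 = 1.
Proof.
rewrite sum_pair sum_pair /=.
under eq_bigr do rewrite exchange_big /=.
rewrite exchange_big -(sum_pr Z); apply: eq_bigr => z _ /=.
transitivity ((\sum_x pr (fun w => (X w, Z w)) (x, z)) *
              (\sum_y pr (fun w => (Y w, Z w)) (y, z)) / pr Z z).
  rewrite mulr_suml big_distrl /=; apply: eq_bigr => x _.
  by rewrite mulr_sumr big_distrl.
rewrite !sum_pr_fst.
by have [->|pz] := eqVneq (pr Z z) 0; rewrite ?mul0r ?mulfK.
Qed.

Lemma entropy_submod (T1 T2 T3 : finType)
    (X : Omega -> T1) (Y : Omega -> T2) (Z : Omega -> T3) :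
  H (fun w => (X w, Y w, Z w)) + H Z <=
  H (fun w => (X w, Z w)) + H (fun w => (Y w, Z w)).
Proof.
pose V := fun w => (X w, Y w, Z w).
pose XZ := fun w => (X w, Z w); pose YZ := fun w => (Y w, Z w).
rewrite -/V -/XZ -/YZ.
have ZE w : Z w = (V w).2 by [].
pose gXZ := fun t : T1 * T2 * T3 => (t.1.1, t.2).
pose gYZ := fun t : T1 * T2 * T3 => (t.1.2, t.2).
have XZE w : XZ w = gXZ (V w) by [].
have YZE w : YZ w = gYZ (V w) by [].
rewrite (entropy_mapE ZE) (entropy_mapE XZE) (entropy_mapE YZE) (entropyE V).
(* Gibbs' inequality against the distribution q(x, y, z) = p(x, z) p(y, z) / p(z). *)
pose q t := pr XZ (gXZ t) * pr YZ (gYZ t) / pr Z t.2.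
have logq t : pr V t * log2 (q t) = pr V t * log2 (pr XZ (gXZ t)) +
    pr V t * log2 (pr YZ (gYZ t)) - pr V t * log2 (pr Z t.2).
  have := pr_ge0 V t; rewrite le_eqVlt => /orP[/eqP <-|pt].
    by rewrite !mul0r addr0 subrr.
  have := pr_gt0_map XZE pt; have := pr_gt0_map YZE pt; have := pr_gt0_map ZE pt.
  move=> ct0 bt0 at0.
  by rewrite log2M ?invr_gt0 ?mulr_gt0 // log2M // log2V //; ring.
have q_ge0 t : 0 <= q t by rewrite divr_ge0 ?mulr_ge0 ?pr_ge0.
have q_gt0 t : 0 < pr V t -> 0 < q t.
  move=> pt; rewrite divr_gt0 ?mulr_gt0 //.
  - exact: (pr_gt0_map XZE pt).
  - exact: (pr_gt0_map YZE pt).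
  - exact: (pr_gt0_map ZE pt).
have := gibbs (pr_ge0 V) q_ge0 _ q_gt0.
rewrite (eq_bigr _ (fun t _ => logq t)) sum_pr_cond_product sum_pr !sumrB big_split /=.
move/(_ (lexx 1)); lra.
Qed.


Lemma cond_entropy_map_le (T1 T2 T3 : finType)
    (W : Omega -> T1) (V : Omega -> T2) (B : Omega -> T3) g :
  (forall w, B w = g (V w)) -> cond_entropy P W V <= cond_entropy P W B.
Proof.
move=> BE; rewrite !cond_entropyE.
have -> : H (fun w => (W w, V w)) = H (fun w => (W w, V w, B w)).
  by apply: (entropy_recode (g := fst) (h := fun t => (t, g t.2))) => w; rewrite //= BE.
have -> : H V = H (fun w => (V w, B w)).
  by apply: (entropy_recode (g := fst) (h := fun t => (t, g t))) => w; rewrite //= BE.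
by have := entropy_submod W V B; lra.
Qed.

Lemma entropy_unit : H (fun _ => tt) = 0.
Proof.
have pr1 : pr (fun _ => tt) tt = 1.
  by rewrite -(sum_pr (fun _ => tt)) (big_pred1 tt) // => -[].
rewrite entropyE (big_pred1 tt) => [|[]] //.
by rewrite pr1 log2E ln_1 mul0r mulr0 oppr0.
Qed.

Lemma cond_entropy_le (T1 T2 : finType) (X : Omega -> T1) (Y : Omega -> T2) :
  cond_entropy P X Y <= H X.
Proof.
have := cond_entropy_map_le X (V := Y) (g := fun _ => tt) (fun _ => erefl).
rewrite [C in _ <= C]cond_entropyE entropy_unit subr0.
by rewrite (entropy_recode (Y := X) (g := fun t => (t, tt)) (h := fst)).
Qed.

Lemma cond_entropy_markov (T1 T2 T3 : finType)
    (X : Omega -> T1) (Y : Omega -> T2) (Z : Omega -> T3)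
    (F : T1 -> T2 -> R) (G : T2 -> T3 -> R) :
  (forall x y z, pr (fun w => (X w, Y w, Z w)) (x, y, z) = F x y * G y z) ->
  cond_entropy P X (fun w => (Y w, Z w)) = cond_entropy P X Y.
Proof.
move=> prE; rewrite !cond_entropyE.
pose V := fun w => (X w, Y w, Z w).
pose XY := fun w => (X w, Y w); pose YZ := fun w => (Y w, Z w).
rewrite (entropy_recode (Y := V) (g := fun t => (t.1.1, (t.1.2, t.2)))
                        (h := fun t => (t.1, t.2.1, t.2.2))) // -/XY -/YZ.
pose gY := fun t : T1 * T2 * T3 => t.1.2.
pose gYZ := fun t : T1 * T2 * T3 => (t.1.2, t.2).
have YE w : Y w = gY (V w) by [].
have XYE w : XY w = (V w).1 by [].
have YZE w : YZ w = gYZ (V w) by [].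
rewrite (entropy_mapE YE) (entropy_mapE XYE) (entropy_mapE YZE) entropyE.
have prXY x y : pr XY (x, y) = F x y * \sum_z G y z.
  by rewrite -(sum_pr_snd XY Z) big_distrr; apply: eq_bigr => z _; exact: prE.
have prYZ y z : pr YZ (y, z) = (\sum_x F x y) * G y z.
  by rewrite -(sum_pr_fst3 X Y Z) big_distrl; apply: eq_bigr => x _; exact: prE.
have prY y : pr Y y = (\sum_x F x y) * \sum_z G y z.
  by rewrite -(sum_pr_snd Y Z) big_distrr; apply: eq_bigr => z _; rewrite prYZ.
suff : \sum_t pr V t * (log2 (pr V t) - log2 (pr YZ (gYZ t))) =
       \sum_t pr V t * (log2 (pr XY t.1) - log2 (pr Y (gY t))).
  by rewrite !(eq_bigr _ (fun t _ => mulrBr _ _ _)) !sumrB; lra.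
apply: eq_bigr => -[[x y] z] _.
have := pr_ge0 V (x, y, z); rewrite le_eqVlt => /orP[/eqP <-|pV]; first by rewrite !mul0r.
have := pr_gt0_map YE pV; have := pr_gt0_map XYE pV; have := pr_gt0_map YZE pV.
rewrite /= => pYZ pXY pY.
have /(congr1 log2) : pr V (x, y, z) * pr Y y = pr XY (x, y) * pr YZ (y, z).
  by rewrite prE prY prXY prYZ; ring.
rewrite log2M // log2M // => logE.
by congr (_ * _); lra.
Qed.

Lemma entropy_indep (T1 T2 : finType) (X : Omega -> T1) (Y : Omega -> T2) :
  (forall x y, pr (fun w => (X w, Y w)) (x, y) = pr X x * pr Y y) ->
  H (fun w => (X w, Y w)) = H X + H Y.
Proof.
move=> prXY; rewrite !entropyE sum_pair -opprD; congr (- _).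
have term x y : pr (fun w => (X w, Y w)) (x, y) * log2 (pr (fun w => (X w, Y w)) (x, y)) =
    pr Y y * (pr X x * log2 (pr X x)) + pr X x * (pr Y y * log2 (pr Y y)).
  rewrite prXY.
  have := pr_ge0 X x; rewrite le_eqVlt => /orP[/eqP <-|px].
    by rewrite !(mul0r, mulr0) addr0.
  have := pr_ge0 Y y; rewrite le_eqVlt => /orP[/eqP <-|py].
    by rewrite !(mul0r, mulr0) addr0.
  by rewrite log2M //; ring.
under eq_bigr do under eq_bigr do rewrite term.
under eq_bigr do rewrite big_split /= -!mulr_sumr -mulr_suml sum_pr mul1r.
by rewrite big_split /= -mulr_suml sum_pr mul1r addrC.
Qed.

Lemma entropy_same_law (T T' : finType) (V V' : Omega -> T) (g : T -> T') :
  (forall t, pr V t = pr V' t) -> H (fun w => g (V w)) = H (fun w => g (V' w)).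
Proof.
move=> lawE; rewrite !entropyE; congr (- _); apply: eq_bigr => y _.
rewrite (pr_map (X := V) (g := g)) // (pr_map (X := V') (g := g)) //.
by under eq_bigr do rewrite lawE.
Qed.

Lemma cond_entropy_same_law (T T1 T2 : finType) (V V' : Omega -> T)
    (f : T -> T1) (g : T -> T2) :
  (forall t, pr V t = pr V' t) ->
  cond_entropy P (fun w => f (V w)) (fun w => g (V w)) =
  cond_entropy P (fun w => f (V' w)) (fun w => g (V' w)).
Proof.
move=> lawE; rewrite !cond_entropyE.
by rewrite (entropy_same_law (fun t => (f t, g t)) lawE) (entropy_same_law g lawE).
Qed.

End Entropy.

(** * Uniformly random files *)

Definition local_to (I : finType) (V T : Type) (S : pred I) (phi : {ffun I -> V} -> T) :=
  forall w w' : {ffun I -> V}, (forall f, S f -> w f = w' f) -> phi w = phi w'.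

Lemma sum_mul_local (I V : finType) (S : pred I) (phi psi : {ffun I -> V} -> R) :
  local_to S phi -> local_to (predC S) psi ->
  (\sum_w phi w * psi w) * #|{: {ffun I -> V}}|%:R = (\sum_w phi w) * (\sum_w psi w).
Proof.
move=> phiS psiS.
pose mix (a b : {ffun I -> V}) := [ffun f => if S f then a f else b f].
pose swap (p : {ffun I -> V} * {ffun I -> V}) := (mix p.1 p.2, mix p.2 p.1).
have swapK : involutive swap.
  by move=> [a b]; congr (_, _); apply/ffunP => f; rewrite !ffunE; case: (S f).
rewrite big_distrl [RHS]big_distrl /=.
rewrite [RHS](eq_bigr (fun a => \sum_b phi a * psi b)) => [|a _]; last by rewrite big_distrr.
rewrite -[RHS](sum_pair (fun p => phi p.1 * psi p.2)) [RHS](reindex_inj (inv_inj swapK)).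
rewrite [RHS](sum_pair (fun p => phi (swap p).1 * psi (swap p).2)); apply: eq_bigr => a _.
rewrite (eq_bigr (fun _ => phi a * psi a)) => [|b _]; last first.
  congr (_ * _); [apply: phiS | apply: psiS] => f /= Sf; rewrite ffunE ?Sf //.
  by rewrite (negbTE Sf).
by rewrite sumr_const mulr_natr.
Qed.

Section UniformFiles.
Variables (K' r L : nat) (U : finType) (pU : U -> R).
Hypothesis pU_ge0 : forall u, 0 <= pU u.
Hypothesis sum_pU : \sum_u pU u = 1.

Local Notation F := (filesT K' r L).
Local Notation P := (@jointP U pU K' r L).
Local Notation pr := (prob_eq P).
Local Notation H := (entropy P).
Local Notation nF := (#|{: F}|%:R : R).

Lemma card_files_gt0 : 0 < nF.
Proof. by rewrite ltr0n; apply/card_gt0P; exists [ffun _ => [ffun _ => false]]. Qed.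

Lemma card_files_neq0 : nF != 0.
Proof. by rewrite gt_eqF // card_files_gt0. Qed.

Lemma jointP_ge0 om : 0 <= P om.
Proof. by rewrite divr_ge0 // ltW // card_files_gt0. Qed.

Lemma sum_jointP : \sum_om P om = 1.
Proof.
rewrite sum_pair -sum_pU; apply: eq_bigr => u _.
have -> : \sum_(w : F) P (u, w) = pU u / nF * nF by rewrite /jointP /= sumr_const mulr_natr.
by rewrite divfK // card_files_neq0.
Qed.

Lemma pr_jointE (T : finType) (X : U * F -> T) x :
  pr X x = \sum_u \sum_w pU u / nF * (X (u, w) == x)%:R.
Proof.
rewrite /prob_eq big_mkcond sum_pair; apply: eq_bigr => u _; apply: eq_bigr => w _.
by case: (X (u, w) == x); rewrite ?mulr1 ?mulr0.
Qed.

Section OneFile.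
Variable th : 'I_K' * 'I_r.

Lemma count_file_eq_const (b b' : fileT L) :
  \sum_(w : F) (w th == b)%:R = \sum_(w : F) (w th == b')%:R :> R.
Proof.
pose d := [ffun l => b l (+) b' l].
pose shift (w : F) : F := [ffun f => if f == th then [ffun l => w f l (+) d l] else w f].
have shiftK : involutive shift.
  move=> w; apply/ffunP => f; rewrite !ffunE; case: (f == th) => //.
  by apply/ffunP => l; rewrite !ffunE addbK.
rewrite (reindex_inj (inv_inj shiftK)); apply: eq_bigr => w _.
rewrite ffunE eqxx; congr ((_ : bool)%:R).
by apply/idP/idP => /eqP/ffunP wE; apply/eqP/ffunP => l; move: (wE l); rewrite !ffunE;
  case: (w th l); case: (b l); case: (b' l).
Qed.

Lemma count_file_eq (b : fileT L) :
  \sum_(w : F) (w th == b)%:R = nF / (2 ^ L)%:R :> R.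
Proof.
have sum_b : \sum_(b' : fileT L) \sum_(w : F) (w th == b')%:R = nF :> R.
  rewrite exchange_big /= -sumr_const; apply: eq_bigr => w _.
  by rewrite (bigD1 (w th)) //= eqxx big1 ?addr0 // => b' /negbTE; rewrite eq_sym => ->.
have card_file : #|{: fileT L}| = (2 ^ L)%N by rewrite card_ffun card_bool card_ord.
rewrite -sum_b (eq_bigr _ (fun b' _ => count_file_eq_const b' b)) sumr_const card_file.
by rewrite -[_ *+ _]mulr_natr mulfK // pnatr_eq0 expn_eq0.
Qed.

Lemma pr_file (b : fileT L) : pr (fun om => om.2 th) b = ((2 ^ L)%:R)^-1.
Proof.
rewrite pr_jointE (eq_bigr (fun u => pU u / nF * (nF / (2 ^ L)%:R))) => [|u _]; last first.
  by rewrite -(count_file_eq b) big_distrr.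
by rewrite -big_distrl -big_distrl /= sum_pU mul1r mulrA mulVf ?mul1r // card_files_neq0.
Qed.

Lemma entropy_file : H (fun om => om.2 th) = L%:R.
Proof.
have pow_gt0 : 0 < (2 ^ L)%:R :> R by rewrite ltr0n expn_gt0.
rewrite (entropyE jointP_ge0) (eq_bigr (fun _ => ((2 ^ L)%:R)^-1 * - L%:R)) => [|b _];
  last first.
  by rewrite pr_file log2V // natrX log2_exp2.
rewrite sumr_const card_ffun card_bool card_ord -mulNrn -mulr_natr -mulNrn -mulr_natr.
by field; rewrite gt_eqF.
Qed.

Lemma pr_file_indep (T : finType) (X : U * F -> T) :
  (forall u, local_to (predC1 th) (fun w => X (u, w))) ->
  forall x b, pr (fun om => (X om, om.2 th)) (x, b) = pr X x * pr (fun om => om.2 th) b.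
Proof.
move=> XE x b; rewrite pr_file !pr_jointE big_distrl /=; apply: eq_bigr => u _.
have split : (\sum_(w : F) (w th == b)%:R * (X (u, w) == x)%:R) * nF =
             nF / (2 ^ L)%:R * \sum_(w : F) (X (u, w) == x)%:R.
  rewrite -(count_file_eq b); apply: (@sum_mul_local _ _ (pred1 th)) => [w w' wE|w w' wE].
    by rewrite wE //= eqxx.
  by rewrite (XE u w w').
rewrite (eq_bigr (fun w : F => pU u / nF * ((w th == b)%:R * (X (u, w) == x)%:R))) => [|w _];
  last by rewrite /= xpair_eqE -mulnb natrM [C in _ * C]mulrC.
rewrite -!big_distrr /= -[C in _ * C = _](mulfK card_files_neq0) split.
have pow_neq0 : (2 ^ L)%:R != 0 :> R by rewrite pnatr_eq0 expn_eq0.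
by field; rewrite pow_neq0 card_files_neq0.
Qed.

Lemma entropy_pair_file (T : finType) (X : U * F -> T) :
  (forall u, local_to (predC1 th) (fun w => X (u, w))) ->
  H (fun om => (X om, om.2 th)) = H X + L%:R.
Proof.
move=> XE; rewrite (entropy_indep jointP_ge0 sum_jointP) ?entropy_file //.
exact: pr_file_indep.
Qed.

End OneFile.

End UniformFiles.

(** * Revealing the files of an edge one by one *)

Definition mask (I T : finType) (S : pred I) (c : {ffun I -> option T}) : {ffun I -> option T} :=
  [ffun f => if S f then c f else None].

Lemma eq_mask_split (I T : finType) (S : pred I) (c c' : {ffun I -> option T}) :
  (c == c') = (mask S c == mask S c') && (mask (predC S) c == mask (predC S) c').
Proof.
apply/eqP/andP => [->|[/eqP/ffunP cS /eqP/ffunP cNS]]; first by [].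
by apply/ffunP => f; move: (cS f) (cNS f); rewrite !ffunE /=; case: (S f).
Qed.

Section PIR.
Variables (N K' r L : nat) (ends : 'I_K' -> 'I_N * 'I_N).
Variables (U QT AT : finType) (pU : U -> R).
Hypothesis pU_ge0 : forall u, 0 <= pU u.
Hypothesis sum_pU : \sum_u pU u = 1.
Variable Q : 'I_K' * 'I_r -> 'I_N -> U -> QT.
Variable A : 'I_N -> QT -> filesT K' r L -> AT.
Hypothesis answer_loc : answer_local ends A.
Variable e : 'I_K'.

Local Notation F := (filesT K' r L).
Local Notation pfiles := {ffun 'I_K' * 'I_r -> option (fileT L)}.
Local Notation P := (@jointP U pU K' r L).
Local Notation pr := (prob_eq P).
Local Notation H := (entropy P).
Local Notation nF := (#|{: F}|%:R : R).
Local Notation P_ge0 := (jointP_ge0 pU_ge0).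
Local Notation sum_P := (sum_jointP K' r L sum_pU).

Definition answer th n (om : U * F) : AT := A n (Q th n om.1) om.2.
Definition queries th (u : U) : {ffun 'I_N -> QT} := [ffun n => Q th n u].

(* [known 0] is the paper's W \ W_{i,j}; [known k] also reveals the first [k] files of W_{i,j}. *)
Definition known (k : nat) (f : 'I_K' * 'I_r) : bool := (f.1 != e) || (f.2 < k)%N.
Definition knowledge th k (om : U * F) := (restrict (known k) om.2, queries th om.1).
Definition cond_answer th n k := cond_entropy P (answer th n) (knowledge th k).

Section LocalView.
Variable n : 'I_N.
Local Notation stn := (fun f => stored ends f n).

Definition local_files k (w : F) := mask (known k) (restrict stn w).
Definition local_knowledge th k (om : U * F) := (local_files k om.2, Q th n om.1).

Lemma mask_stored_known k (w : F) : mask stn (restrict (known k) w) = local_files k w.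
Proof. by apply/ffunP => f; rewrite !ffunE; case: (known k f); case: (stn f). Qed.

Definition view_of (d : pfiles * {ffun 'I_N -> QT}) := (mask stn d.1, d.2 n).

Lemma local_knowledgeE th k om : local_knowledge th k om = view_of (knowledge th k om).
Proof. by rewrite /local_knowledge /view_of mask_stored_known ffunE. Qed.

Lemma answer_knowledge_eqE th k u (w : F) x y z :
  ((answer th n (u, w), local_knowledge th k (u, w)), knowledge th k (u, w)) == (x, y, z)
  = [&& (Q th n u == y.2) && (queries th u == z.2),
        (A n y.2 w == x) && (local_files k w == y.1),
        mask stn z.1 == y.1 &
        mask (predC stn) (restrict (known k) w) == mask (predC stn) z.1].
Proof.
case: y z => y1 y2 [z1 z2]; rewrite /answer /= !xpair_eqE.
rewrite (eq_mask_split stn (restrict _ _)) mask_stored_known /=.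
case: (Q th n u =P y2) => [->|]; last by rewrite !andbF.
case: (local_files k w =P y1) => [->|]; last by rewrite !andbF.
by rewrite [y1 == _]eq_sym; case: (A n y2 w == x); case: (queries th u == z2);
  case: (mask stn z1 == y1); case: (_ == _).
Qed.

Lemma pr_answer_knowledge th k x y z :
  pr (fun om => (answer th n om, local_knowledge th k om, knowledge th k om)) (x, y, z) =
  (\sum_(w : F) ((A n y.2 w == x) && (local_files k w == y.1))%:R) *
  ((\sum_u pU u / nF * ((Q th n u == y.2) && (queries th u == z.2))%:R *
            (mask stn z.1 == y.1)%:R) *
   (\sum_(w : F) (mask (predC stn) (restrict (known k) w) == mask (predC stn) z.1)%:R) / nF).
Proof.
pose phi := fun w : F => ((A n y.2 w == x) && (local_files k w == y.1))%:R : R.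
pose psi := fun w : F =>
  (mask (predC stn) (restrict (known k) w) == mask (predC stn) z.1)%:R : R.
have phi_psi : (\sum_w phi w * psi w) * nF = (\sum_w phi w) * \sum_w psi w.
  apply: (@sum_mul_local _ _ stn) => w w' wE; rewrite /phi /psi.
    rewrite /local_files (answer_loc y.2 wE); congr (_ && (_ == _))%:R.
    by apply/ffunP => f; rewrite !ffunE; case: (stn f) (wE f) => // ->.
  congr (_ == _)%:R; apply/ffunP => f; rewrite !ffunE /=.
  by move: (wE f) => /=; case: (stn f) => //= ->.
rewrite pr_jointE (eq_bigr (fun u =>
    pU u / nF * ((Q th n u == y.2) && (queries th u == z.2))%:R * (mask stn z.1 == y.1)%:R *
    \sum_w phi w * psi w)) => [|u _]; last first.
  rewrite big_distrr /=; apply: eq_bigr => w _.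
  by rewrite answer_knowledge_eqE /phi /psi -!mulnb !natrM; ring.
have -> : \sum_w phi w * psi w = (\sum_w phi w) * (\sum_w psi w) / nF.
  by rewrite -phi_psi mulfK // card_files_neq0.
by rewrite -big_distrl /=; ring.
Qed.

(* Given its own view, the answer of S_n is independent of the rest of the knowledge. *)
Lemma cond_answer_local th k :
  cond_answer th n k = cond_entropy P (answer th n) (local_knowledge th k).
Proof.
rewrite /cond_answer -(cond_entropy_pair_map P_ge0 _ (local_knowledgeE th k)).
exact: (cond_entropy_markov P_ge0 (pr_answer_knowledge th k)).
Qed.

Lemma cond_answer_priv th th' k :
  (forall x, pr (fun om => (Q th n om.1, A n (Q th n om.1) om.2, restrict stn om.2)) x =
             pr (fun om => (Q th' n om.1, A n (Q th' n om.1) om.2, restrict stn om.2)) x) ->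
  cond_answer th n k = cond_answer th' n k.
Proof.
move=> lawE; rewrite !cond_answer_local.
exact: (cond_entropy_same_law P_ge0 (fun t => t.1.2) (fun t => (mask (known k) t.2, t.1.1)) lawE).
Qed.

End LocalView.

Definition all_answers th (om : U * F) := ([ffun n => answer th n om], queries th om.1).
Definition file_at th (om : U * F) : fileT L := om.2 th.

Section EdgeStep.
Variables i j : 'I_N.
Hypothesis ends_e : ends e = (i, j).

Lemma known_of_stored k n f : n != i -> n != j -> stored ends f n -> known k f.
Proof.
move=> ni nj; rewrite /stored /known; case: (f.1 =P e) => [->|] //=.
by rewrite ends_e /= (negbTE ni) (negbTE nj).
Qed.

Definition fill (c : pfiles) : F := [ffun f => odflt [ffun _ => false] (c f)].

Definition set_file th (c : pfiles) (b : fileT L) : pfiles :=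
  [ffun f => if f == th then Some b else c f].

Definition answers_from (t : AT * AT * (pfiles * {ffun 'I_N -> QT})) :=
  ([ffun n => if n == i then t.1.1 else if n == j then t.1.2 else A n (t.2.2 n) (fill t.2.1)],
   t.2.2).

(* The default entries of [fill] are never read: servers other than S_i and S_j store only
   known files. *)
Lemma all_answersE th k om :
  all_answers th om = answers_from (answer th i om, answer th j om, knowledge th k om).
Proof.
case: om => u w; congr (_, _); apply/ffunP => n; rewrite !ffunE.
case: (n =P i) => [->|/eqP ni] //; case: (n =P j) => [->|/eqP nj] //.
apply: answer_loc => f fn; rewrite !ffunE /=.
by rewrite (known_of_stored k ni nj fn).
Qed.

Section Step.
Variables (k : nat) (k_lt_r : (k < r)%N).
Local Notation th := (e, Ordinal k_lt_r).

Lemma known_succE f : known k.+1 f = (f == th) || known k f.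
Proof.
case: f => [f1 f2]; rewrite /known /= ltnS leq_eqVlt xpair_eqE.
by have [] := eqVneq f1 e.
Qed.

Lemma restrict_known_succ (w : F) :
  restrict (known k.+1) w = set_file th (restrict (known k) w) (w th).
Proof.
apply/ffunP => f; rewrite !ffunE known_succE.
by case: (f =P th) => [->|].
Qed.

Lemma restrict_known_pred (w : F) :
  restrict (known k) w = mask (known k) (restrict (known k.+1) w).
Proof.
apply/ffunP => f; rewrite !ffunE known_succE.
by case: (known k f); rewrite ?orbT.
Qed.

Lemma file_of_known_succ (w : F) :
  w th = odflt [ffun _ => false] (restrict (known k.+1) w th).
Proof. by rewrite ffunE known_succE eqxx. Qed.

Lemma entropy_knowledge_succ : H (knowledge th k.+1) = H (knowledge th k) + L%:R.
Proof.
have loc u : local_to (predC1 th) (fun w => knowledge th k (u, w)).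
  move=> w w' wE; congr (_, _); apply/ffunP => f; rewrite !ffunE.
  case kf: (known k f) => //; rewrite wE //=.
  by apply: contraTneq kf => ->; rewrite /known /= eqxx ltnn.
rewrite -(entropy_pair_file pU_ge0 sum_pU loc).
apply: (entropy_recode P_ge0 (g := fun t => (set_file th t.1.1 t.2, t.1.2))
          (h := fun t => (mask (known k) t.1, t.2, odflt [ffun _ => false] (t.1 th)))) => om.
  by rewrite /knowledge /= restrict_known_succ.
by rewrite /knowledge /= -restrict_known_pred -file_of_known_succ.
Qed.

Lemma cond_entropy_file_edge_knowledge :
  cond_entropy P (file_at th) (fun om => (answer th i om, answer th j om, knowledge th k om)) =
  H (fun om => (answer th i om, answer th j om, knowledge th k.+1 om)) -
  H (fun om => (answer th i om, answer th j om, knowledge th k om)).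
Proof.
rewrite (cond_entropyE P_ge0); congr (_ - _).
apply: (entropy_recode P_ge0
  (g := fun t : AT * AT * (pfiles * {ffun 'I_N -> QT}) =>
          (odflt [ffun _ => false] (t.2.1 th), (t.1, (mask (known k) t.2.1, t.2.2))))
  (h := fun t : fileT L * (AT * AT * (pfiles * {ffun 'I_N -> QT})) =>
          (t.2.1, (set_file th t.2.2.1 t.1, t.2.2.2)))) => om.
  by rewrite /knowledge /= -restrict_known_pred -file_of_known_succ.
by rewrite /knowledge /= restrict_known_succ.
Qed.

Lemma cond_answer_step :
  cond_entropy P (file_at th) (all_answers th) = 0 ->
  L%:R + (cond_answer th i k.+1 + cond_answer th j k.+1) / 2 <=
  cond_answer th i k + cond_answer th j k.
Proof.
move=> reliable.
have := cond_entropy_map_le P_ge0 sum_P (file_at th) (all_answersE th k).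
rewrite reliable cond_entropy_file_edge_knowledge.
have := entropy_submod P_ge0 sum_P (answer th i) (answer th j) (knowledge th k).
have := entropy_map_le P_ge0
  (X := fun om => (answer th i om, answer th j om, knowledge th k.+1 om))
  (Y := fun om => (answer th i om, knowledge th k.+1 om))
  (g := fun t => (t.1.1, t.2)) (fun _ => erefl).
have := entropy_map_le P_ge0
  (X := fun om => (answer th i om, answer th j om, knowledge th k.+1 om))
  (Y := fun om => (answer th j om, knowledge th k.+1 om))
  (g := fun t => (t.1.2, t.2)) (fun _ => erefl).
have := entropy_knowledge_succ.
rewrite /cond_answer !(cond_entropyE P_ge0) /=; lra.
Qed.

End Step.

Hypothesis reliable : forall th, cond_entropy P (file_at th) (all_answers th) = 0.
Hypothesis private : forall n th th' x,
  pr (fun om => (Q th n om.1, A n (Q th n om.1) om.2, restrict (stored ends ^~ n) om.2)) x =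
  pr (fun om => (Q th' n om.1, A n (Q th' n om.1) om.2, restrict (stored ends ^~ n) om.2)) x.

Lemma cond_answer_sum_priv th th' k :
  cond_answer th i k + cond_answer th j k = cond_answer th' i k + cond_answer th' j k.
Proof.
by rewrite (cond_answer_priv k (private i th th')) (cond_answer_priv k (private j th th')).
Qed.

Lemma cond_answer_bound m : (m <= r)%N -> forall th,
  (\sum_(t < m) 2^-1 ^+ t) * L%:R <= cond_answer th i (r - m) + cond_answer th j (r - m).
Proof.
elim: m => [|m IH] m_le_r th.
  by rewrite big_ord0 mul0r addr_ge0 // (cond_entropy_ge0 P_ge0).
have k_lt_r : (r - m.+1 < r)%N.
  by rewrite ltn_subrL; apply/andP; split => //; apply: leq_trans m_le_r.
have := cond_answer_step (reliable (e, Ordinal k_lt_r)); rewrite subnSK //.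
rewrite (cond_answer_sum_priv th (e, Ordinal k_lt_r)) big_ord_recl expr0.
under eq_bigr do rewrite /bump /= exprS.
rewrite -mulr_sumr; have := IH (ltnW m_le_r) (e, Ordinal k_lt_r).
have -> : 2^-1 = 1 / 2 :> R by rewrite mul1r.
set s := \sum_(t < m) _; lra.
Qed.

End EdgeStep.
End PIR.

Theorem lemma1
  (N K' r L : nat) (ends : 'I_K' -> 'I_N * 'I_N)
  (Hsimple : simple_graph ends)
  (U QT AT : finType) (pU : U -> R)
  (HpU0 : forall u, 0 <= pU u) (HpU1 : \sum_(u : U) pU u = 1)
  (Q : 'I_K' * 'I_r -> 'I_N -> U -> QT)
  (A : 'I_N -> QT -> filesT K' r L -> AT)
  (Hloc : answer_local ends A)
  (Hrel : forall theta : 'I_K' * 'I_r,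
     cond_entropy (@jointP U pU K' r L)
       (fun om => om.2 theta)
       (fun om => ([ffun n => A n (Q theta n om.1) om.2],
                   [ffun n => Q theta n om.1])) = 0)
  (Hpriv : forall (n : 'I_N) (theta theta' : 'I_K' * 'I_r)
                  (x : QT * AT * {ffun 'I_K' * 'I_r -> option (fileT L)}),
     prob_eq (@jointP U pU K' r L)
       (fun om => (Q theta n om.1, A n (Q theta n om.1) om.2,
                   restrict (fun f => stored ends f n) om.2)) x =
     prob_eq (@jointP U pU K' r L)
       (fun om => (Q theta' n om.1, A n (Q theta' n om.1) om.2,
                   restrict (fun f => stored ends f n) om.2)) x)
  (theta : 'I_K' * 'I_r) (e : 'I_K') (i j : 'I_N)
  (Hij : ends e = (i, j)) :
  let P := @jointP U pU K' r L in
  let Ai := fun om : U * filesT K' r L => A i (Q theta i om.1) om.2 in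
  let Aj := fun om : U * filesT K' r L => A j (Q theta j om.1) om.2 in
  let Z := fun om : U * filesT K' r L =>
             (restrict (fun f => f.1 != e) om.2, [ffun n => Q theta n om.1]) in
  entropy P Ai + entropy P Aj >= cond_entropy P Ai Z + cond_entropy P Aj Z /\
  cond_entropy P Ai Z + cond_entropy P Aj Z >=
    (\sum_(k < r) (2^-1) ^+ k) * L%:R.
Proof.
move=> P Ai Aj Z.
have P_ge0 : forall om, 0 <= P om := jointP_ge0 HpU0.
have sum_P : \sum_om P om = 1 := sum_jointP K' r L HpU1.
split.
  have := cond_entropy_le P_ge0 sum_P Ai Z; have := cond_entropy_le P_ge0 sum_P Aj Z.
  by move=> ? ?; apply: lerD.
have ZE : Z =1 knowledge Q e theta 0.
  by move=> om; congr (_, _); apply/ffunP => f; rewrite !ffunE /known ltn0 orbF.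
rewrite !(eq_cond_entropy P_ge0 _ ZE).
by have := cond_answer_bound HpU0 HpU1 Hloc Hij Hrel Hpriv (leqnn r) theta; rewrite subnn.
Qed.
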